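(* For every integer $n>2$ there exists a unique $\zeta>1$ such that the system $$P_n'(1-\varepsilon_{j+1})-P_n'(1-\varepsilon_j)=\varepsilon_{j+1}P_n'(1-\varepsilon_{j+1})+P_n(1-\varepsilon_{j+1})-\frac{j}{\zeta},\qquad j=1,\dots,n-1,$$ has a solution $(\varepsilon_j)_{j=1}^n$ with $0=\varepsilon_n<\varepsilon_{n-1}<\dots<\varepsilon_2<\varepsilon_1=1$.
   Context: $P_n(t)=\sum_{i=1}^nt^i$ and $P_n'(t)=\sum_{i=1}^n i\,t^{i-1}$. *)

From HB Require Import structures.
From mathcomp Require Import all_boot all_order all_algebra.
From mathcomp Require Import reals.
Set Implicit Arguments. Unset Strict Implicit. Unset Printing Implicit Defensive.
Import Order.TTheory GRing.Theory Num.Theory.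
Local Open Scope ring_scope.

Definition Pn {R : realType} (n : nat) (t : R) : R :=
  \sum_(1 <= i < n.+1) t ^+ i.

Definition dPn {R : realType} (n : nat) (t : R) : R :=
  \sum_(1 <= i < n.+1) i%:R * t ^+ i.-1.

From HB Require Import structures.
From mathcomp Require Import all_boot all_order all_algebra.
From mathcomp Require Import reals.
From mathcomp Require Import classical_sets boolp functions topology normedtype realfun.
From mathcomp Require Import ring lra.
Import Order.TTheory GRing.Theory Num.Theory.
Import numFieldNormedType.Exports.
Local Open Scope classical_set_scope.
Local Open Scope ring_scope.

(* With x_j = 1 - eps_j and s = 1/zeta the system reads
   F(x_{j+1}) = P'(x_j) - j s, where F(t) = t P'(t) - P(t) = sum (i-1) t^i is
   increasing on [0,1]. Solving it forward from x_1 = 0 (inverting F, clamped to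
   [0,1]) gives x_j(s) depending continuously on s. At s = 1 every x_j is 0,
   while at s = 0 the inequality E = H(H-1) - 2F >= 0 on [0,1], with H = P' - F
   (E vanishes for n = 0 and increases with n), pushes P'(x_j) above the
   triangular number j(j+1)/2, so x_n overshoots. The intermediate value theorem
   gives s with x_n = 1, and the monotonicity of F and P' forces this sequence
   to increase. Two solutions with parameters s < t satisfy y_j < x_j for j >= 2,
   so they cannot both end at 1: the parameter is unique. *)

Section Polynomials.
Context {R : realType}.
Implicit Types (m : nat) (x : R).

Definition Fn m x := x * dPn m x - Pn m x.
Definition Hn m x := dPn m x - Fn m x.
Definition En m x := Hn m x * (Hn m x - 1) - 2 * Fn m x.

Lemma PnS m x : Pn m.+1 x = Pn m x + x ^+ m.+1.
Proof. by rewrite /Pn big_nat_recr. Qed.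

Lemma dPnS m x : dPn m.+1 x = dPn m x + m.+1%:R * x ^+ m.
Proof. by rewrite /dPn big_nat_recr. Qed.

Lemma Fn0 x : Fn 0 x = 0.
Proof. by rewrite /Fn /Pn /dPn !big_geq // mulr0 subr0. Qed.

Lemma FnS m x : Fn m.+1 x = Fn m x + m%:R * x ^+ m.+1.
Proof. rewrite /Fn PnS dPnS exprS -addn1 natrD; ring. Qed.

Lemma Hn0 x : Hn 0 x = 0.
Proof. by rewrite /Hn Fn0 /dPn big_geq // subr0. Qed.

Lemma HnS m x : Hn m.+1 x = Hn m x + x ^+ m * (m%:R + 1 - m%:R * x).
Proof. rewrite /Hn FnS dPnS exprS -addn1 natrD; ring. Qed.

Lemma En0 x : En 0 x = 0.
Proof. by rewrite /En Hn0 Fn0; ring. Qed.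

Lemma mul1B_Hn m x :
  (1 - x) * Hn m x = 1 + x - 2 * x ^+ m - (m%:R - 1) * x ^+ m * (1 - x).
Proof.
elim: m => [|m IH]; first by rewrite Hn0 expr0; ring.
rewrite HnS mulrDr IH exprS -addn1 natrD; ring.
Qed.

Lemma Hn1 m : Hn m 1 = m%:R.
Proof.
by elim: m => [|m IH]; rewrite ?Hn0 // HnS IH expr1n -addn1 natrD; ring.
Qed.

Lemma Fn1 m : 2 * Fn m 1 = m%:R * (m%:R - 1).
Proof.
elim: m => [|m IH]; first by rewrite Fn0; ring.
by rewrite FnS mulrDr IH expr1n -addn1 natrD; ring.
Qed.

Lemma En1 m : En m 1 = 0.
Proof. by rewrite /En Fn1 Hn1; ring. Qed.

Lemma dPn_Hn_Fn m x : dPn m x = Hn m x + Fn m x.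
Proof. by rewrite /Hn subrK. Qed.

Lemma mul1B_EnS_sub m x :
  (1 - x) * (En m.+1 x - En m x) =
  x ^+ m * ((1 + m%:R * (1 - x)) + x * (3 + m%:R * (1 - x))) *
  (1 - x ^+ m * (1 + m%:R * (1 - x))).
Proof.
have H := mul1B_Hn m x.
rewrite /En HnS FnS exprS; set h := Hn m x in H *; set u := x ^+ m in H *.
have -> : (1 - x) * ((h + u * (m%:R + 1 - m%:R * x)) *
    (h + u * (m%:R + 1 - m%:R * x) - 1) - 2 * (Fn m x + m%:R * (x * u)) -
    (h * (h - 1) - 2 * Fn m x)) =
  u * (m%:R + 1 - m%:R * x) * (2 * ((1 - x) * h) +
    (1 - x) * (u * (m%:R + 1 - m%:R * x) - 1)) - 2 * m%:R * (x * u) * (1 - x).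
  by ring.
rewrite H; ring.
Qed.


Lemma exprn_mul1DnB_le1 m x : 0 <= x <= 1 -> x ^+ m * (1 + m%:R * (1 - x)) <= 1.
Proof.
move=> /andP[x0 x1]; elim: m => [|m IH]; first by rewrite expr0; lra.
have xm0 : 0 <= x ^+ m.+1 by rewrite exprn_ge0.
have xm1 : x ^+ m.+1 <= 1 by rewrite exprn_ile1.
have -> : x ^+ m.+1 * (1 + m.+1%:R * (1 - x)) =
    x * (x ^+ m * (1 + m%:R * (1 - x))) + x ^+ m.+1 * (1 - x).
  by rewrite exprS -addn1 natrD; ring.
nra.
Qed.

Lemma En_le_succ m x : 0 <= x <= 1 -> En m x <= En m.+1 x.
Proof.
move=> x01; have [->|x_neq1] := eqVneq x 1; first by rewrite !En1.
have /andP[x0 x1] := x01.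
have x_lt1 : 0 < 1 - x by rewrite subr_gt0 lt_neqAle x_neq1.
have mx0 : 0 <= m%:R * (1 - x) by rewrite mulr_ge0 // ltW.
rewrite -subr_ge0 -(pmulr_rge0 _ x_lt1) mul1B_EnS_sub.
rewrite mulr_ge0 ?subr_ge0 ?exprn_mul1DnB_le1 // mulr_ge0 ?exprn_ge0 //.
by rewrite addr_ge0 ?mulr_ge0 //; lra.
Qed.

Lemma En_ge0 m x : 0 <= x <= 1 -> 0 <= En m x.
Proof.
move=> x01; elim: m => [|m IH]; first by rewrite En0.
exact: le_trans IH (En_le_succ _ _ x01).
Qed.

Lemma En_gt0 m x : (2 <= m)%N -> 0 < x < 1 -> 0 < En m x.
Proof.
move=> m2 /andP[x0 x1]; have x01 : 0 <= x <= 1 by rewrite !ltW.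
elim: m m2 => [//|m IH]; rewrite leq_eqVlt => /orP[/eqP <-|m2].
  have E1 : En 1 x = 0 by rewrite /En HnS FnS Hn0 Fn0 expr0; ring.
  have := mul1B_EnS_sub 1 x; rewrite E1 subr0 expr1 => E2.
  have : 0 < (1 - x) * En 2 x by rewrite E2; apply: mulr_gt0; nra.
  by rewrite pmulr_rgt0 // subr_gt0.
exact: lt_le_trans (IH m2) (En_le_succ _ _ x01).
Qed.

Lemma Hn_ge0 m x : 0 <= x <= 1 -> 0 <= Hn m x.
Proof.
move=> /andP[x0 x1]; elim: m => [|m IH]; first by rewrite Hn0.
rewrite HnS addr_ge0 // mulr_ge0 ?exprn_ge0 //.
have : m%:R * x <= m%:R :> R by rewrite ler_piMr.
lra.
Qed.

Lemma dPn_le m : {in Num.nneg &, {homo @dPn R m : x y / x <= y}}.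
Proof.
move=> x y; rewrite !nnegrE => x0 y0 xy; elim: m => [|m IH].
  by rewrite /dPn !big_geq.
by rewrite !dPnS lerD // ler_wpM2l // lerXn2r.
Qed.

Lemma Fn_lt m : (2 <= m)%N -> {in Num.nneg &, {homo Fn m : x y / x < y}}.
Proof.
move=> m2 x y; rewrite !nnegrE => x0 y0 xy.
elim: m m2 => [//|m IH]; rewrite leq_eqVlt => /orP[/eqP <-|m2].
  by rewrite !(FnS 1) !(FnS 0) !Fn0 !mul0r !add0r !mul1r ltrXn2r.
by rewrite !FnS ltr_leD ?IH // ler_wpM2l // lerXn2r // ltW.
Qed.

Lemma Fn_mono m : (2 <= m)%N -> {in Num.nneg &, {mono Fn m : x y / x <= y}}.
Proof. by move=> m2; apply: le_mono_in; exact: Fn_lt. Qed.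

Lemma Fn_at0 m : Fn m (0 : R) = 0.
Proof.
by elim: m => [|m IH]; rewrite ?Fn0 // FnS IH expr0n mulr0 addr0.
Qed.

Lemma dPn_at0 m : (0 < m)%N -> dPn m (0 : R) = 1.
Proof.
case: m => // m _; elim: m => [|m IH]; first by rewrite dPnS /dPn big_geq // add0r mulr1.
by rewrite dPnS IH expr0n mulr0 addr0.
Qed.

(* Since 2 F_m + E_m = H_m (H_m - 1) and P_m' = H_m + F_m, a bound on F_m and on
   2 F_m + E_m by consecutive triangular numbers pushes P_m' to the next one. *)
Lemma dPn_gt_triangular m x k : 0 <= x <= 1 -> (1 <= k)%N ->
    k%:R * (k%:R - 1) <= 2 * Fn m x -> k%:R * (k%:R - 1) < 2 * Fn m x + En m x ->
  k%:R * (k%:R + 1) < 2 * dPn m x.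
Proof.
move=> x01 k1 Fk Ek; have h0 := Hn_ge0 m _ x01; have kR : 1 <= k%:R :> R by rewrite ler1n.
have hk : k%:R < Hn m x.
  rewrite ltNge; apply/negP => hk; move: Ek; rewrite /En; nra.
rewrite dPn_Hn_Fn; lra.
Qed.

End Polynomials.

Section Continuity.
Context {R : realType}.

Lemma continuous_monomials (a : nat -> R) (e : nat -> nat) (r : seq nat) :
  continuous (fun x : R => \sum_(i <- r) a i * x ^+ e i).
Proof.
apply: continuous_big => [|i _]; first exact: add_continuous.
by move=> x; apply: cvgM; [exact: cvg_cst | exact: exprn_continuous].
Qed.

Lemma continuous_dPn m : continuous (@dPn R m).
Proof. exact: continuous_monomials. Qed.

Lemma continuous_Pn m : continuous (@Pn R m).
Proof.
rewrite /Pn; under eq_fun do under eq_bigr do rewrite -[_ ^+ _]mul1r.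
exact: continuous_monomials.
Qed.

Lemma continuous_Fn m : continuous (@Fn R m).
Proof.
move=> x; apply: cvgB; last exact: continuous_Pn.
by apply: cvgM; [exact: cvg_id | exact: continuous_dPn].
Qed.

End Continuity.

Lemma continuous_within_comp {T U V : topologicalType} (A : set U)
    (f : T -> U) (g : U -> V) :
  (forall x, A (f x)) -> continuous f -> {within A, continuous g} ->
  continuous (g \o f).
Proof.
move=> Af cf; rewrite continuous_subspace_in => cg x.
have cgfx : g @ within A (nbhs (f x)) --> g (f x).
  by rewrite nbhs_subspace_in //; exact: cg (mem_set (Af x)).
have fA : f @ nbhs x `=>` within A (nbhs (f x)).
  move=> P; rewrite /within => /(cf x) /= fP.
  by apply: (@filterS _ (nbhs x) _ _ _ _ fP) => y /= /(_ (Af y)).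
exact: cvg_trans (cvg_fmap2 fA) cgfx.
Qed.

(* Clamping makes the inverse of F_m on [0, 1] a total, continuous and
   nondecreasing function on the whole line. *)
Definition Fn_inv {R : realType} m := pinv (`[0, 1] : set R) (Fn m).
Definition Fn_clamp {R : realType} m (v : R) := Num.max 0 (Num.min v (Fn m 1)).
Definition Fn_inv_clamp {R : realType} m (v : R) := Fn_inv m (Fn_clamp m v).

Section ClampedInverse.
Context {R : realType} {m : nat}.
Hypothesis m2 : (2 <= m)%N.
Local Notation F := (@Fn R m).
Local Notation Fn_inv := (@Fn_inv R m).
Local Notation Fn_clamp := (@Fn_clamp R m).
Local Notation Fn_inv_clamp := (@Fn_inv_clamp R m).

Let F1_ge0 : 0 <= F 1.
Proof. by rewrite -(Fn_at0 m) Fn_mono ?nnegrE. Qed.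

Lemma Fn_clamp_itv v : Fn_clamp v \in `[0, F 1].
Proof. by rewrite in_itv /= le_max lexx /= ge_max F1_ge0 ge_min lexx orbT. Qed.

Let F_within : {within `[0, 1], continuous F}.
Proof. exact/continuous_subspaceT/continuous_Fn. Qed.

Let F_surj : set_surj `[0, 1]%classic `[0, F 1]%classic F.
Proof.
have := segment_continuous_le_surjective ler01 _ F_within.
by rewrite Fn_at0; apply.
Qed.

Lemma Fn_invK : {in `[0, F 1], cancel Fn_inv F}.
Proof. by move=> v v01; rewrite (surjpK _ F_surj) // mem_setE. Qed.

Lemma FnK : {in `[0, 1], cancel F Fn_inv}.
Proof.
rewrite -[mem _]mem_setE; apply: pinvKV => x y; rewrite !mem_setE !in_itv /=.
move=> /andP[x0 _] /andP[y0 _] Fxy.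
by apply/le_anti/andP; split; rewrite -(Fn_mono _ m2) ?nnegrE // Fxy.
Qed.

Lemma Fn_inv_itv v : v \in `[0, F 1] -> Fn_inv v \in `[0, 1].
Proof. by move=> /F_surj[x x01 <-]; rewrite FnK. Qed.

Lemma Fn_inv_mono : {in `[0, F 1] &, {mono Fn_inv : v w / v <= w}}.
Proof. by have := segment_can_le ler01 F_within FnK; rewrite Fn_at0. Qed.

Lemma continuous_Fn_inv : {within `[0, F 1], continuous Fn_inv}.
Proof. by have := segment_can_le_continuous ler01 F_within FnK; rewrite Fn_at0. Qed.

Lemma Fn_inv_clamp_itv v : 0 <= Fn_inv_clamp v <= 1.
Proof. by have := Fn_inv_itv _ (Fn_clamp_itv v); rewrite in_itv. Qed.

Lemma Fn_inv_clampK v : F (Fn_inv_clamp v) = Fn_clamp v.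
Proof. exact: Fn_invK (Fn_clamp_itv v). Qed.

Lemma Fn_inv_clamp_eq v x : 0 <= x <= 1 -> Fn_clamp v = F x -> Fn_inv_clamp v = x.
Proof. by move=> x01 vx; rewrite /Fn_inv_clamp vx FnK // in_itv. Qed.

Lemma Fn_inv_clamp_le : {homo Fn_inv_clamp : v w / v <= w}.
Proof.
by move=> v w vw; rewrite Fn_inv_mono ?Fn_clamp_itv // le_max2 // le_min2.
Qed.

Lemma Fn_clamp_ge0 v : 0 <= v -> Fn_clamp v = Num.min v (F 1).
Proof. by move=> v0; apply/max_idPr; rewrite le_min v0 F1_ge0. Qed.

Lemma Fn_clampE v : 0 <= v <= F 1 -> Fn_clamp v = v.
Proof. by case/andP=> v0 vF; rewrite /Fn_clamp (min_idPl vF) (max_idPr v0). Qed.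

Lemma Fn_clampEoo v : 0 < Fn_clamp v < F 1 -> Fn_clamp v = v.
Proof.
rewrite /Fn_clamp lt_max ltxx gt_max lt_min gt_min ltxx orbF /=.
move=> /andP[/andP[v0 _] /andP[_ vF]].
by rewrite (min_idPl _) ?ltW // (max_idPr _) ?ltW.
Qed.

Lemma Fn_inv_clampKoo v : 0 < Fn_inv_clamp v < 1 -> F (Fn_inv_clamp v) = v.
Proof.
move=> /andP[x0 x1]; rewrite Fn_inv_clampK Fn_clampEoo // -Fn_inv_clampK.
have x0' := ltW x0.
by apply/andP; split; [rewrite -(Fn_at0 m) |]; apply: (Fn_lt _ m2); rewrite ?nnegrE.
Qed.

Lemma continuous_Fn_inv_clamp : continuous Fn_inv_clamp.
Proof.
apply: (@continuous_within_comp _ _ _ `[0, F 1]%classic) => [v|v|]; first exact: Fn_clamp_itv.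
  apply: (@continuous_max _ _ (cst 0) (id \min cst (F 1))); first exact: cst_continuous.
  by apply: continuous_min; [exact: cvg_id | exact: cst_continuous].
exact: continuous_Fn_inv.
Qed.

End ClampedInverse.

(* The system in the variables x_j = 1 - eps_j and s = 1/zeta. *)
Definition profile {R : realType} m (s : R) (x : nat -> R) :=
  [/\ x 1%N = 0, x m = 1, forall j, (1 <= j < m)%N -> x j < x j.+1 &
      forall j, (1 <= j < m)%N -> Fn m (x j.+1) = dPn m (x j) - j%:R * s].

Section Profiles.
Context {R : realType} {m : nat}.
Hypothesis m2 : (2 <= m)%N.
Implicit Types (s t : R) (x y : nat -> R).

Lemma profile_mono {s x} : profile m s x ->
  {in [pred j | 1 <= j <= m]%N &, {mono x : i j / (i <= j)%N >-> i <= j}}.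
Proof.
case=> _ _ x_inc _; apply: Order.NatMonotonyTheory.incn_inP.
  move=> i j /andP[i1 _] /andP[_ jm] k /andP[ik kj].
  by rewrite inE (leq_trans i1 (ltnW ik)) (leq_trans (ltnW kj) jm).
by move=> j /andP[j1 _] /andP[_ jm]; rewrite x_inc ?j1.
Qed.

Lemma profile_itv {s x} : profile m s x -> forall j, (1 <= j <= m)%N -> 0 <= x j <= 1.
Proof.
move=> Px j jD; have [x1 xm _ _] := Px; have m1 : (0 < m)%N := ltnW m2.
have mono := profile_mono Px.
by rewrite -x1 -xm !mono ?inE ?leqnn ?m1 //; case/andP: jD => -> ->.
Qed.

Lemma profile_lt {s t x y} : profile m s x -> profile m t y -> s < t ->
  forall j, (1 <= j < m)%N -> y j.+1 < x j.+1.
Proof.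
move=> Px Py st; have [x1 _ _ Ex] := Px; have [y1 _ _ Ey] := Py.
have x_itv := profile_itv Px; have y_itv := profile_itv Py.
elim=> [//|j IH] /andP[j1 jm].
have yx : y j.+1 <= x j.+1.
  case: j IH j1 jm => [_ _ _|j IH j1 jm]; first by rewrite x1 y1.
  exact/ltW/IH/ltnW.
have jm' : (j < m)%N := ltnW jm.
have /andP[y0 _] := y_itv j.+1 jm'; have /andP[x0 _] := x_itv j.+1 jm'.
have /andP[y0' _] := y_itv j.+2 jm; have /andP[x0' _] := x_itv j.+2 jm.
rewrite -(leW_mono_in (Fn_mono _ m2)) ?nnegrE // Ex ?Ey ?jm //.
by rewrite ler_ltB ?dPn_le ?nnegrE // ltr_pM2l.
Qed.

Lemma profile_param_unique {s t x y} : profile m s x -> profile m t y -> s = t.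
Proof.
move=> Px Py; have [_ xm _ _] := Px; have [_ ym _ _] := Py.
have m0 : (0 < m)%N := ltnW m2.
have m1 : (1 <= m.-1 < m)%N by rewrite ltn_predL m0 andbT -ltnS prednK.
have [st|ts|//] := ltgtP s t.
- by have := profile_lt Px Py st _ m1; rewrite prednK // xm ym ltxx.
- by have := profile_lt Py Px ts _ m1; rewrite prednK // xm ym ltxx.
Qed.

End Profiles.

Fixpoint shoot {R : realType} m (s : R) k : R :=
  match k with
  | 0 | 1 => 0
  | k'.+1 => Fn_inv_clamp m (dPn m (shoot m s k') - k'%:R * s)
  end.

Section Shooting.
Context {R : realType} {m : nat}.
Hypothesis m2 : (2 <= m)%N.
Local Notation F := (@Fn R m).
Local Notation g := (@Fn_inv_clamp R m).
Local Notation shoot := (@shoot R m).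

Lemma shootS s k : (1 <= k)%N -> shoot s k.+1 = g (dPn m (shoot s k) - k%:R * s).
Proof. by case: k. Qed.

Lemma shoot_itv s k : 0 <= shoot s k <= 1.
Proof. by case: k => [|[|k]]; rewrite ?lexx ?ler01 //; exact: Fn_inv_clamp_itv. Qed.

Lemma continuous_shoot k : continuous (shoot ^~ k).
Proof.
elim: k => [|[|k] IH] s; try exact: cst_continuous.
apply: (@continuous_comp _ _ _ (fun s => dPn m (shoot s k.+1) - k.+1%:R * s) g).
  apply: cvgB; first exact: continuous_comp (IH s) (continuous_dPn _ _).
  by apply: cvgM; [exact: cvg_cst | exact: cvg_id].
exact: continuous_Fn_inv_clamp.
Qed.

Lemma shoot_at1 k : shoot 1 k = 0.
Proof.
elim: k => [|[|k] IH] //; rewrite shootS // IH dPn_at0 ?(leq_trans _ m2) // mulr1.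
apply: Fn_inv_clamp_eq; rewrite ?lexx ?ler01 // Fn_at0.
by apply/max_idPl; rewrite ge_min subr_le0 ler1n.
Qed.

Lemma triangular_lt_dPn_shoot0 j : (2 <= j)%N -> (j < m)%N ->
  j%:R * (j%:R + 1) < 2 * dPn m (shoot 0 j).
Proof.
have F1E := Fn1 (R := R) m; have mR : 2 <= m%:R :> R by rewrite (ler_nat R 2).
elim: j => [//|j IH]; rewrite leq_eqVlt => /orP[/eqP <- m3|j2 jm].
  have mR3 : 3 <= m%:R :> R by rewrite (ler_nat R 3).
  rewrite shootS // dPn_at0 ?(leq_trans _ m2) // mulr0 subr0.
  set x := g 1; have /andP[x0 x1] : 0 <= x <= 1 := Fn_inv_clamp_itv m2 1.
  have Fx : F x = 1 by rewrite Fn_inv_clampK // Fn_clamp_ge0 // (min_idPl _) //; nra.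
  have x_gt0 : 0 < x.
    by rewrite lt_neqAle x0 andbT; apply/eqP => x_eq0; move: Fx; rewrite -x_eq0 Fn_at0; lra.
  have x_lt1 : x < 1.
    by rewrite lt_neqAle x1 andbT; apply/eqP => x_eq1; move: Fx; rewrite x_eq1; nra.
  have Ex : 0 < En m x by apply: En_gt0; rewrite ?x_gt0.
  apply: dPn_gt_triangular => //; rewrite ?x0 ?x1 ?Fx //; lra.
have IHj := IH j2 (ltnW jm).
rewrite shootS ?mulr0 ?subr0; last exact: ltnW.
set v := dPn m (shoot 0 j) in IHj *; set x := g v.
have /andP[x0 x1] : 0 <= x <= 1 := Fn_inv_clamp_itv m2 v.
have jmR : j%:R + 2 <= m%:R :> R by rewrite -(natrD R j 2) ler_nat addn2.
have jR : 2 <= j%:R :> R by rewrite (ler_nat R 2).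
have Fx : j.+1%:R * (j.+1%:R - 1) < 2 * F x.
  rewrite (Fn_inv_clampK m2) (Fn_clamp_ge0 m2); last by nra.
  by rewrite -addn1 natrD addrK mulrC; have [//|_] := leP v (F 1); nra.
have Ex : 0 <= En m x by apply: En_ge0; rewrite x0.
by apply: dPn_gt_triangular => //; rewrite ?x0 ?x1 //; lra.
Qed.

Lemma shoot_le_step s k : 0 <= s -> (1 <= k)%N ->
  shoot s k.+1 <= shoot s k -> shoot s k.+2 <= shoot s k.+1.
Proof.
move=> s0 k1 le_k; rewrite shootS // [X in _ <= X]shootS //.
apply: (Fn_inv_clamp_le m2); apply: lerB; last by rewrite ler_wpM2r ?ler_nat.
have /andP[xk0 _] := shoot_itv s k; have /andP[xk10 _] := shoot_itv s k.+1.
by apply: dPn_le; rewrite ?nnegrE.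
Qed.

Lemma shoot_le_from s k i : 0 <= s -> (1 <= k)%N ->
  shoot s k.+1 <= shoot s k -> shoot s (k + i).+1 <= shoot s (k + i).
Proof.
move=> s0 k1 le_k; elim: i => [|i IH]; first by rewrite addn0.
by rewrite addnS; apply: shoot_le_step => //; rewrite (leq_trans k1) ?leq_addr.
Qed.

Lemma exists_shoot_param : (2 < m)%N ->
  exists2 s, 0 < s < 1 & dPn m (shoot s m.-1) - m.-1%:R * s = F 1.
Proof.
move=> m3; set phi := fun s => dPn m (shoot s m.-1) - m.-1%:R * s.
have F1E := Fn1 (R := R) m; have m1 : (0 < m)%N by exact: leq_trans m2.
have mR : 3 <= m%:R :> R by rewrite (ler_nat R 3).
have m1R : m.-1%:R = m%:R - 1 :> R by rewrite -subn1 natrB.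
have phi1 : phi 1 < F 1 by rewrite /phi shoot_at1 dPn_at0 // mulr1 m1R; nra.
have phi0 : F 1 < phi 0.
  have m1_ge2 : (2 <= m.-1)%N by rewrite -ltnS prednK.
  have := triangular_lt_dPn_shoot0 _ m1_ge2; rewrite ltn_predL m1 /phi mulr0 subr0 m1R.
  by move=> /(_ isT); nra.
have phi_cont : {within `[0, 1], continuous phi}.
  apply: continuous_subspaceT => s; apply: cvgB.
    exact: continuous_comp (continuous_shoot _ s) (continuous_dPn _ _).
  by apply: cvgM; [exact: cvg_cst | exact: cvg_id].
have [|s] := IVT ler01 phi_cont (_ : Num.min (phi 0) (phi 1) <= F 1 <= Num.max (phi 0) (phi 1)).
  by rewrite ge_min le_max (ltW phi1) (ltW phi0) orbT.
rewrite in_itv /= => /andP[s0 s1] phis; exists s => //.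
rewrite !lt_neqAle s0 s1 !andbT.
by apply/andP; split; apply/eqP => es; subst s; lra.
Qed.

Lemma shoot_profile s : 0 < s < 1 ->
  dPn m (shoot s m.-1) - m.-1%:R * s = Fn m 1 -> profile m s (shoot s).
Proof.
move=> /andP[s0 s1] phis; have m0 : (0 < m)%N := ltnW m2.
have m1 : (0 < m.-1)%N by rewrite -ltnS prednK.
have shoot_m : shoot s m = 1.
  have -> : shoot s m = shoot s m.-1.+1 by rewrite prednK.
  rewrite shootS // phis; apply: (Fn_inv_clamp_eq m2); rewrite ?lexx ?ler01 //.
  by rewrite Fn_clampE // lexx andbT -(Fn_at0 m) (Fn_mono _ m2) ?nnegrE ?ler01.
have shoot_inc : forall k, (1 <= k < m)%N -> shoot s k < shoot s k.+1.
  move=> k /andP[k1 km]; rewrite ltNge; apply/negP => le_k.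
  have := shoot_le_from _ _ (m.-1 - k) (ltW s0) k1 le_k.
  have km1 : (k <= m.-1)%N by rewrite -ltnS prednK.
  rewrite subnKC // prednK // shoot_m => le1.
  have /andP[_ ge1] := shoot_itv s m.-1.
  have xm1 : shoot s m.-1 = 1 by apply/le_anti; rewrite ge1 le1.
  have mR : 1 <= m%:R :> R by rewrite ler1n.
  move: phis; rewrite xm1 dPn_Hn_Fn Hn1 -subn1 natrB //; nra.
split => // j /andP[j1 jm]; move: (jm); rewrite leq_eqVlt => /orP[/eqP jm1|jm1].
  by rewrite jm1 shoot_m -phis -jm1.
rewrite shootS //; apply: (Fn_inv_clampKoo m2); rewrite -shootS //.
have /andP[x0 _] := shoot_itv s j; have /andP[_ x1] := shoot_itv s j.+2.
by rewrite (le_lt_trans x0) ?(lt_le_trans _ x1) ?shoot_inc ?j1.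
Qed.

End Shooting.

Definition eps_system {R : realType} m (zeta : R) (eps : nat -> R) :=
  [/\ eps m = 0, eps 1%N = 1,
      (forall j, (1 <= j < m)%N -> eps j.+1 < eps j) &
      (forall j, (1 <= j <= m.-1)%N ->
         dPn m (1 - eps j.+1) - dPn m (1 - eps j)
         = eps j.+1 * dPn m (1 - eps j.+1) + Pn m (1 - eps j.+1) - j%:R / zeta)].

Section EpsSystem.
Context {R : realType} {m : nat}.
Hypothesis m0 : (0 < m)%N.

Let jm_pred j : (j <= m.-1)%N = (j < m)%N.
Proof. by rewrite -ltnS prednK. Qed.

Lemma Fn_stepE (x y c : R) : (Fn m y = dPn m x - c) <->
  (dPn m y - dPn m x = (1 - y) * dPn m y + Pn m y - c).
Proof. by rewrite /Fn; split=> E; lra. Qed.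

Lemma profile_eps_system s (x : nat -> R) :
  profile m s x -> eps_system m s^-1 (fun j => 1 - x j).
Proof.
case=> x1 xm x_inc Ex; split=> [|||j]; rewrite ?x1 ?xm ?subrr ?subr0 //.
  by move=> j /x_inc; rewrite ltrD2l ltrN2.
by rewrite jm_pred invrK !subKr => /Ex/Fn_stepE.
Qed.

Lemma eps_system_profile zeta (eps : nat -> R) :
  eps_system m zeta eps -> profile m zeta^-1 (fun j => 1 - eps j).
Proof.
case=> em e1 e_dec Ee; split=> [|||j jm]; rewrite ?em ?e1 ?subrr ?subr0 //.
  by move=> j /e_dec; rewrite ltrD2l ltrN2.
by apply/Fn_stepE; rewrite subKr; apply: Ee; rewrite jm_pred.
Qed.

End EpsSystem.

Theorem mainTheorem7 (R : realType) (n : nat) (hn : (2 < n)%N) :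
  exists! zeta : R, 1 < zeta /\
    exists eps : nat -> R,
      [/\ eps n = 0, eps 1%N = 1,
          (forall j : nat, (1 <= j < n)%N -> eps j.+1 < eps j) &
          (forall j : nat, (1 <= j <= n.-1)%N ->
             dPn n (1 - eps j.+1) - dPn n (1 - eps j)
             = eps j.+1 * dPn n (1 - eps j.+1) + Pn n (1 - eps j.+1)
               - j%:R / zeta)].
Proof.
have n2 : (2 <= n)%N := ltnW hn; have n0 : (0 < n)%N := ltnW n2.
have [s s01 phis] := exists_shoot_param (R := R) n2 hn.
have Ps := shoot_profile n2 _ s01 phis.
exists s^-1; split.
  split; first by case/andP: s01 => s0 s1; rewrite invf_gt1.
  by exists (fun j => 1 - shoot n s j); exact: profile_eps_system.
move=> zeta [_ [eps /(eps_system_profile n0) Pz]].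
by rewrite (profile_param_unique n2 Ps Pz) invrK.
Qed.
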